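(* Let $$y=\frac{32s(s+1)(5s^2+6s-3)}{(s^2+2s+5)(3s^2+2s+3)^2},\qquad t=\frac{1024s^3(s+1)^2}{(s^2+6s+1)(3s^2+2s+3)^3}.$$ Then $y(t)$ is a solution of $\mathrm{P}_{\mathrm{VI}}$ with parameters $(\theta_1,\theta_2,\theta_3,\theta_4)=(1/2,1/4,1/2,3/4)$.
   Context: $\mathrm{P}_{\mathrm{VI}}$ is the equation $$\frac{d^2y}{dt^2}=\frac12\Big(\frac1y+\frac1{y-1}+\frac1{y-t}\Big)\Big(\frac{dy}{dt}\Big)^2-\Big(\frac1t+\frac1{t-1}+\frac1{y-t}\Big)\frac{dy}{dt}+\frac{y(y-1)(y-t)}{t^2(t-1)^2}\Big(\alpha+\beta\frac{t}{y^2}+\gamma\frac{t-1}{(y-1)^2}+\delta\frac{t(t-1)}{(y-t)^2}\Big),$$ with $\alpha=(\theta_4-1)^2/2$, $\beta=-\theta_1^2/2$, $\gamma=\theta_3^2/2$, $\delta=(1-\theta_2^2)/2$. When $y,t$ are given as rational functions of a parameter on a curve, derivatives with respect to $t$ are computed via the chain rule. *)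

From Stdlib Require Import Reals.
From Coquelicot Require Import Coquelicot.
Open Scope R_scope.

Definition PVI_rhs (th1 th2 th3 th4 t y y1 : R) : R :=
  let alpha := (th4 - 1)^2 / 2 in
  let beta := - th1^2 / 2 in
  let gamma := th3^2 / 2 in
  let delta := (1 - th2^2) / 2 in
  1/2 * (1/y + 1/(y-1) + 1/(y-t)) * y1^2
  - (1/t + 1/(t-1) + 1/(y-t)) * y1
  + y*(y-1)*(y-t) / (t^2 * (t-1)^2)
    * (alpha + beta * t / y^2 + gamma * (t-1) / (y-1)^2
       + delta * t * (t-1) / (y-t)^2).

Definition PVI_holds (th1 th2 th3 th4 t y y1 y2 : R) : Prop :=
  y2 = PVI_rhs th1 th2 th3 th4 t y y1.

Definition y_of (s : R) : R :=
  32*s*(s+1)*(5*s^2+6*s-3) / ((s^2+2*s+5)*(3*s^2+2*s+3)^2).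

Definition t_of (s : R) : R :=
  1024*s^3*(s+1)^2 / ((s^2+6*s+1)*(3*s^2+2*s+3)^3).

Definition dydt (s : R) : R := Derive y_of s / Derive t_of s.
Definition d2ydt2 (s : R) : R := Derive dydt s / Derive t_of s.

(* Along the curve, dy/dt is the rational function [dydt_closed] of s: this
   holds on a neighbourhood of every point where dt/ds does not vanish, so
   d^2y/dt^2 is the s-derivative of that rational function divided by dt/ds.
   Substituting everything into P_VI leaves an identity between rational
   functions of s, which [field] verifies once the relevant polynomial
   factors are known to be nonzero. *)
From Stdlib Require Import Reals Lra.
From Coquelicot Require Import Coquelicot.
Open Scope R_scope.

Definition dy_ds_num (s : R) : R :=
  -45 + 120*s + 681*s^2 + 530*s^3 + 37*s^4 - 140*s^5 - 129*s^6 - 30*s^7.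

Definition dy_ds (s : R) : R :=
  32 * dy_ds_num s / ((s^2+2*s+5)^2 * (3*s^2+2*s+3)^3).

Definition dt_ds (s : R) : R :=
  1024*s^2*(s+1)*(1-s)*(3*s^2+10*s+3)^2 / ((s^2+6*s+1)^2 * (3*s^2+2*s+3)^4).

Definition dydt_closed (s : R) : R :=
  dy_ds_num s * (s^2+6*s+1)^2 * (3*s^2+2*s+3) /
  (32 * s^2 * (s+1) * (1-s) * (3*s^2+10*s+3)^2 * (s^2+2*s+5)^2).

Lemma quad_2_5_neq0 (s : R) : s^2 + 2*s + 5 <> 0.
Proof. nra. Qed.

Lemma quad_3_2_3_neq0 (s : R) : 3*s^2 + 2*s + 3 <> 0.
Proof. nra. Qed.

(* The denominator half relies on [/ 0 = 0]. *)
Lemma Rdiv_neq0 (a b : R) : a / b <> 0 -> a <> 0 /\ b <> 0.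
Proof.
  intros H; split; intros E; apply H; rewrite E; unfold Rdiv;
    [ring | rewrite Rinv_0; ring].
Qed.

Lemma pow_succ_neq0 (x : R) (n : nat) : x ^ S n <> 0 -> x <> 0.
Proof. intros H E; apply H; subst x; simpl; ring. Qed.

Ltac prod_neq0 := simpl pow in *; unfold Rminus in *;
  repeat apply Rmult_integral_contrapositive_currified; auto; lra.

Lemma Derive_y_of (s : R) : Derive y_of s = dy_ds s.
Proof.
  pose proof (quad_2_5_neq0 s); pose proof (quad_3_2_3_neq0 s).
  apply is_derive_unique; unfold y_of; auto_derive.
  - prod_neq0.
  - unfold dy_ds, dy_ds_num; field; auto.
Qed.

Lemma Derive_t_of (s : R) : s^2 + 6*s + 1 <> 0 -> Derive t_of s = dt_ds s.
Proof.
  intros h; pose proof (quad_3_2_3_neq0 s).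
  apply is_derive_unique; unfold t_of; auto_derive.
  - prod_neq0.
  - unfold dt_ds; field; auto.
Qed.

Lemma dt_ds_neq0_factors (s : R) : dt_ds s <> 0 ->
  s^2 + 6*s + 1 <> 0 /\ s <> 0 /\ s + 1 <> 0 /\ 1 - s <> 0 /\
  3*s^2 + 10*s + 3 <> 0.
Proof.
  unfold dt_ds; intros [Hnum Hden]%Rdiv_neq0.
  apply Rmult_neq_0_reg in Hnum as [Hnum H5%pow_succ_neq0].
  apply Rmult_neq_0_reg in Hnum as [Hnum H4].
  apply Rmult_neq_0_reg in Hnum as [Hnum H3].
  apply Rmult_neq_0_reg in Hnum as [_ H2%pow_succ_neq0].
  apply Rmult_neq_0_reg in Hden as [H1%pow_succ_neq0 _].
  tauto.
Qed.

Lemma dydt_eq_closed (s : R) : dt_ds s <> 0 -> dydt s = dydt_closed s.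
Proof.
  intros (h3 & h4 & h5 & h6 & h7)%dt_ds_neq0_factors.
  pose proof (quad_2_5_neq0 s); pose proof (quad_3_2_3_neq0 s).
  unfold dydt; rewrite Derive_y_of, Derive_t_of by exact h3.
  unfold dy_ds, dt_ds, dydt_closed; field; repeat split; auto.
Qed.

Lemma continuous_dt_ds (s : R) : s^2 + 6*s + 1 <> 0 -> continuous dt_ds s.
Proof.
  intros h; pose proof (quad_3_2_3_neq0 s).
  apply (@ex_derive_continuous R_AbsRing R_NormedModule); unfold dt_ds.
  auto_derive; prod_neq0.
Qed.

Lemma dydt_locally_closed (s : R) :
  dt_ds s <> 0 -> locally s (fun x => dydt x = dydt_closed x).
Proof.
  intros hT; pose proof (dt_ds_neq0_factors s hT) as [h3 _].
  apply (filter_imp (fun x => dt_ds x <> 0)); [exact dydt_eq_closed |].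
  exact (continuous_dt_ds s h3 _ (open_neq 0 _ hT)).
Qed.

Lemma num_neq0_of_diff_neq0 (u v num den : R) :
  u <> v -> u - v = num / den -> num <> 0.
Proof. intros H E; apply (Rdiv_neq0 num den); rewrite <- E; now apply Rminus_eq_contra. Qed.

Lemma PVI_closed_form (s : R) :
  s^2 + 6*s + 1 <> 0 -> s <> 0 -> s + 1 <> 0 -> 1 - s <> 0 ->
  3*s^2 + 10*s + 3 <> 0 -> 5*s^2 + 6*s - 3 <> 0 ->
  (* numerators of y - t, y - 1 and t - 1 *)
  32*s*(s+1)*(5*s^2+6*s-3) * ((s^2+6*s+1)*(3*s^2+2*s+3))
    - 1024*s^3*(s+1)^2*(s^2+2*s+5) <> 0 ->
  32*s*(s+1)*(5*s^2+6*s-3) - (s^2+2*s+5)*(3*s^2+2*s+3)^2 <> 0 ->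
  1024*s^3*(s+1)^2 - (s^2+6*s+1)*(3*s^2+2*s+3)^3 <> 0 ->
  PVI_holds (1/2) (1/4) (1/2) (3/4) (t_of s) (y_of s)
    (dydt_closed s) (Derive dydt_closed s / dt_ds s).
Proof.
  intros h3 h4 h5 h6 h7 h8 h9 h10 h11.
  pose proof (quad_2_5_neq0 s); pose proof (quad_3_2_3_neq0 s).
  erewrite is_derive_unique.
  2:{ unfold dydt_closed, dy_ds_num; auto_derive; [prod_neq0 | reflexivity]. }
  unfold PVI_holds, PVI_rhs, t_of, y_of, dydt_closed, dt_ds, dy_ds_num.
  field; repeat split; auto.
Qed.

Theorem mainTheorem9 : forall s : R,
  s^2 + 2*s + 5 <> 0 ->
  3*s^2 + 2*s + 3 <> 0 ->
  s^2 + 6*s + 1 <> 0 ->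
  Derive t_of s <> 0 ->
  t_of s <> 0 -> t_of s <> 1 ->
  y_of s <> 0 -> y_of s <> 1 -> y_of s <> t_of s ->
  PVI_holds (1/2) (1/4) (1/2) (3/4) (t_of s) (y_of s) (dydt s) (d2ydt2 s).
Proof.
  intros s h1 h2 h3 hT _ ht1 hy0 hy1 hyt.
  rewrite Derive_t_of in hT by exact h3.
  pose proof (dt_ds_neq0_factors s hT) as (_ & h4 & h5 & h6 & h7).
  pose proof (dydt_locally_closed s hT) as Hloc.
  assert (h8 : 5*s^2 + 6*s - 3 <> 0).
  { apply Rdiv_neq0 in hy0 as [hy0 _].
    now apply Rmult_neq_0_reg in hy0 as [_ hy0]. }
  replace (dydt s) with (dydt_closed s) by (symmetry; exact (locally_singleton _ _ Hloc)).
  replace (d2ydt2 s) with (Derive dydt_closed s / dt_ds s)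
    by (unfold d2ydt2; now rewrite (Derive_ext_loc _ _ _ Hloc), Derive_t_of).
  apply PVI_closed_form; auto.
  - apply (num_neq0_of_diff_neq0 _ _ _
      ((s^2+2*s+5) * (3*s^2+2*s+3)^3 * (s^2+6*s+1)) hyt).
    unfold y_of, t_of; field; auto.
  - apply (num_neq0_of_diff_neq0 _ _ _ ((s^2+2*s+5) * (3*s^2+2*s+3)^2) hy1).
    unfold y_of; field; auto.
  - apply (num_neq0_of_diff_neq0 _ _ _ ((s^2+6*s+1) * (3*s^2+2*s+3)^3) ht1).
    unfold t_of; field; auto.
Qed.
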